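(* For each $2p\in\{140, 196, 220, 260, 308, 340\}$ there exists a cyclic DCA$(4,2p+1;2p)$ satisfying P1 and P2.
   Context: A difference covering array DCA$(k,\eta;n)$ over $\mathbb{Z}_n$ (a cyclic DCA) is an $\eta\times k$ matrix $Q=[q(i,j)]$ with entries in $\mathbb{Z}_n$ such that for every pair of distinct columns $j,j'$ the multiset $\{q(i,j)-q(i,j') : 0\le i\le \eta-1\}$ contains every element of $\mathbb{Z}_n$ at least once. A DCA$(k,n+1;n)$ is taken in normalized form: all entries of its last row (row $n$) and last column (column $k-1$) equal $0$. It satisfies P1 if $0$ occurs at least twice in every column, and P2 if for all distinct columns $j,j'$ with $j\neq k-1\neq j'$, the set $\{q(i,j)-q(i,j') : 0\le i\le n-1\}$ equals $\mathbb{Z}_n\setminus\{0\}$. *)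

(* Z_n is represented by 'I_n with arithmetic mod n. *)
From mathcomp Require Import all_boot all_order all_algebra.
Set Implicit Arguments. Unset Strict Implicit. Unset Printing Implicit Defensive.

Definition zdiff (n : nat) (a b : 'I_n) : nat := (a + (n - b)) %% n.

(* Q is a DCA(k, eta; n) over Z_n: for all distinct columns j j',
   every element of Z_n occurs among the differences q(i,j) - q(i,j'). *)
Definition is_DCA (n eta k : nat) (Q : 'M['I_n]_(eta, k)) : Prop :=
  forall j j' : 'I_k, j != j' ->
    forall d : 'I_n, exists i : 'I_eta, zdiff (Q i j) (Q i j') = d.

Definition DCA_normalized (n k : nat) (Q : 'M['I_n]_(n.+1, k.+1)) : Prop :=
  (forall j, nat_of_ord (Q ord_max j) = 0) /\
  (forall i, nat_of_ord (Q i ord_max) = 0).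

Definition DCA_P1 (n eta k : nat) (Q : 'M['I_n]_(eta, k)) : Prop :=
  forall j : 'I_k, 2 <= #|[set i : 'I_eta | nat_of_ord (Q i j) == 0]|.

Definition DCA_P2 (n k : nat) (Q : 'M['I_n]_(n.+1, k.+1)) : Prop :=
  forall j j' : 'I_k.+1, j != j' -> j != ord_max -> j' != ord_max ->
    forall d : nat,
      (exists2 i : 'I_n.+1, i < n & zdiff (Q i j) (Q i j') = d) <->
      (0 < d < n).

From mathcomp Require Import all_boot all_order all_algebra.
Set Implicit Arguments. Unset Strict Implicit. Unset Printing Implicit Defensive.

(* The six arrays are exhibited explicitly.  Each of the four properties is
   decided by a boolean test on the table of entries, proved sound for arrays
   of every size, and the tests are run by evaluation.  Only the first three
   columns and the first n rows are listed: the zero last row and column of a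
   normalized array come from the out-of-range defaults of [column_table]. *)

Definition zdiffn (n x y : nat) : nat := (x + (n - y)) %% n.

Lemma mem_iota_ord m (i : 'I_m) : val i \in iota 0 m.
Proof. by rewrite mem_iota ltn_ord. Qed.

Lemma ltn_neq_ord_max k (j : 'I_k.+1) : j != ord_max -> j < k.
Proof. by rewrite -val_eqE ltn_neqAle -ltnS ltn_ord andbT. Qed.

(* A fast test of [{subset s <= D}], complete when [s] is sorted (as [iota]
   is): it avoids quadratically many membership tests. *)
Definition covered_by (s D : seq nat) : bool := subseq s (sort leq D).

Lemma covered_by_subset s D : covered_by s D -> {subset s <= D}.
Proof. by move=> /mem_subseq sub_s x /sub_s; rewrite mem_sort. Qed.

Section TableTests.

Variable a : nat -> nat -> nat.

Definition col_diffs n rows j j' : seq nat :=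
  [seq zdiffn n (a i j) (a i j') | i <- iota 0 rows].

Lemma col_diffsP n rows j j' d :
  reflect (exists2 i, i < rows & zdiffn n (a i j) (a i j') = d)
          (d \in col_diffs n rows j j').
Proof.
apply: (iffP mapP) => [[i i_in ->] | [i lt_i <-]].
  by exists i; rewrite // mem_iota in i_in.
by exists i; rewrite // mem_iota.
Qed.

Definition table_bounded n eta k : bool :=
  all (fun i => all (fun j => a i j < n) (iota 0 k)) (iota 0 eta).

Definition dca_table n eta k : bool :=
  all (fun j => all (fun j' =>
    (j == j') || covered_by (iota 0 n) (col_diffs n eta j j')) (iota 0 k)) (iota 0 k).

Definition normalized_table n k : bool :=
  all (fun j => a n j == 0) (iota 0 k.+1) && all (fun i => a i k == 0) (iota 0 n.+1).

Definition p1_table eta k : bool :=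
  all (fun j => 1 < count (fun i => a i j == 0) (iota 0 eta)) (iota 0 k).

Definition p2_table n k : bool :=
  all (fun j => all (fun j' => (j == j') ||
    let D := col_diffs n n j j' in all (leq 1) D && covered_by (iota 1 n.-1) D)
    (iota 0 k)) (iota 0 k).

Section Soundness.

Variable n : nat.

Lemma is_DCA_table eta k (Q : 'M['I_n]_(eta, k)) :
  (forall i j, Q i j = a i j :> nat) -> dca_table n eta k -> is_DCA Q.
Proof.
move=> QE /allP dca j j' neq_jj' d.
have /allP/(_ j' (mem_iota_ord j'))/orP[/eqP/val_inj eq_jj' | /covered_by_subset cover] :=
  dca j (mem_iota_ord j).
  by rewrite eq_jj' eqxx in neq_jj'.
have /col_diffsP[i lt_i <-] := cover d (mem_iota_ord d).
by exists (Ordinal lt_i); rewrite /zdiff !QE.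
Qed.

Lemma DCA_normalized_table k (Q : 'M['I_n]_(n.+1, k.+1)) :
  (forall i j, Q i j = a i j :> nat) -> normalized_table n k -> DCA_normalized Q.
Proof.
move=> QE /andP[/allP last_row /allP last_col]; split.
  by move=> j; rewrite QE; apply/eqP/last_row/mem_iota_ord.
by move=> i; rewrite QE; apply/eqP/last_col/mem_iota_ord.
Qed.

Lemma DCA_P1_table eta k (Q : 'M['I_n]_(eta, k)) :
  (forall i j, Q i j = a i j :> nat) -> p1_table eta k -> DCA_P1 Q.
Proof.
move=> QE /allP p1 j; rewrite cardsE cardE size_filter -enumT.
have := p1 j (mem_iota_ord j); rewrite -val_enum_ord count_map.
by under eq_count => i do rewrite /= -QE.
Qed.

Lemma DCA_P2_table k (Q : 'M['I_n]_(n.+1, k.+1)) :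
  (forall i j, Q i j = a i j :> nat) -> p2_table n k -> DCA_P2 Q.
Proof.
move=> QE /allP p2 j j' neq_jj' /ltn_neq_ord_max lt_j /ltn_neq_ord_max lt_j' d.
have j_in : val j \in iota 0 k by rewrite mem_iota.
have j'_in : val j' \in iota 0 k by rewrite mem_iota.
have /allP/(_ j' j'_in)/orP[/eqP/val_inj eq_jj' | /andP[/allP pos /covered_by_subset cover]] :=
  p2 j j_in.
  by rewrite eq_jj' eqxx in neq_jj'.
have n_gt0 : 0 < n := leq_ltn_trans (leq0n _) (ltn_ord (Q ord0 j)).
split=> [[i lt_i <-] | /andP[d_gt0 lt_d]].
  rewrite /zdiff !QE /zdiffn ltn_pmod // andbT.
  by apply: pos; apply/col_diffsP; exists i.
have /col_diffsP[i lt_i <-] : d \in col_diffs n n j j'.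
  by apply: cover; rewrite mem_iota d_gt0 add1n prednK.
by exists (Ordinal (leqW lt_i)); rewrite // /zdiff !QE.
Qed.

End Soundness.

Definition table_mx m eta k : 'M['I_m.+1]_(eta, k) := \matrix_(i, j) inord (a i j).

Lemma table_mxE m eta k :
  table_bounded m.+1 eta k -> forall i j, table_mx m eta k i j = a i j :> nat.
Proof.
move=> /allP bounded i j; rewrite mxE inordK //.
exact: (allP (bounded i (mem_iota_ord i))) _ (mem_iota_ord j).
Qed.

Definition dca_certificate m k : bool :=
  [&& table_bounded m.+1 m.+2 k.+1, dca_table m.+1 m.+2 k.+1,
      normalized_table m.+1 k, p1_table m.+2 k.+1 & p2_table m.+1 k].

Lemma dca_of_certificate m k : dca_certificate m k ->
  exists Q : 'M['I_m.+1]_(m.+2, k.+1),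
    is_DCA Q /\ DCA_normalized Q /\ DCA_P1 Q /\ DCA_P2 Q.
Proof.
case/and5P=> /table_mxE QE dca norm p1 p2.
exists (table_mx m m.+2 k.+1).
split; first exact: is_DCA_table.
split; first exact: DCA_normalized_table.
by split; [apply: DCA_P1_table | apply: DCA_P2_table].
Qed.

End TableTests.

Definition column_table (cols : seq (seq nat)) (i j : nat) : nat :=
  nth 0 (nth [::] cols j) i.

Definition columns140 : seq (seq nat) :=
  [::
   [:: 80; 20; 40; 120; 100; 60; 1; 121; 81; 101; 41; 61; 22; 2; 102; 122; 62;
       82; 43; 23; 123; 3; 83; 103; 24; 104; 124; 64; 44; 4; 85; 65; 25; 45; 125;
       5; 106; 86; 46; 66; 6; 26; 127; 107; 67; 87; 27; 47; 8; 128; 88; 108; 48;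
       68; 129; 69; 89; 29; 9; 109; 10; 90; 110; 50; 30; 130; 71; 51; 11; 31;
       111; 131; 52; 132; 12; 92; 72; 32; 113; 93; 53; 73; 13; 33; 134; 114; 74;
       94; 34; 54; 115; 55; 75; 15; 135; 95; 36; 16; 116; 136; 76; 96; 57; 37;
       137; 17; 97; 117; 78; 58; 18; 38; 118; 138; 99; 79; 39; 59; 139; 19; 0;
       21; 42; 63; 84; 105; 126; 7; 28; 49; 70; 91; 112; 133; 14; 35; 56; 77; 98;
       119];
   [:: 61; 101; 41; 33; 73; 13; 83; 103; 3; 128; 88; 8; 90; 110; 10; 107; 67;
       127; 17; 97; 117; 37; 137; 57; 114; 74; 134; 62; 82; 122; 12; 52; 132; 9;
       109; 29; 44; 4; 64; 72; 32; 92; 118; 138; 38; 6; 26; 66; 58; 18; 78; 69;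
       89; 129; 81; 1; 121; 80; 20; 40; 93; 53; 113; 65; 25; 85; 47; 87; 27; 86;
       46; 106; 60; 120; 100; 136; 76; 96; 2; 102; 22; 116; 36; 16; 31; 111; 131;
       30; 130; 50; 104; 124; 24; 95; 15; 135; 75; 115; 55; 48; 68; 108; 19; 59;
       139; 34; 54; 94; 23; 123; 43; 51; 11; 71; 79; 39; 99; 5; 45; 125; 133; 98;
       21; 112; 0; 77; 91; 49; 63; 7; 56; 119; 35; 14; 28; 105; 126; 84; 42; 70];
   [:: 55; 75; 115; 17; 97; 117; 137; 57; 37; 46; 106; 86; 45; 125; 5; 50; 30;
       130; 53; 113; 93; 123; 43; 23; 118; 138; 38; 67; 127; 107; 9; 109; 29; 71;
       51; 11; 27; 47; 87; 139; 19; 59; 128; 88; 8; 26; 66; 6; 96; 136; 76; 81;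
       1; 121; 20; 40; 80; 111; 131; 31; 25; 85; 65; 82; 122; 62; 73; 13; 33; 15;
       135; 95; 79; 39; 99; 61; 101; 41; 3; 83; 103; 124; 24; 104; 72; 32; 92;
       132; 12; 52; 100; 60; 120; 2; 102; 22; 10; 90; 110; 16; 116; 36; 69; 89;
       129; 134; 114; 74; 94; 34; 54; 4; 64; 44; 48; 68; 108; 78; 58; 18; 14; 49;
       119; 28; 77; 63; 21; 98; 35; 91; 126; 112; 42; 56; 133; 84; 0; 7; 70; 105]].

Lemma certificate140 : dca_certificate (column_table columns140) 139 3.
Proof. by vm_compute. Qed.

Definition columns196 : seq (seq nat) :=
  [::
   [:: 22; 50; 78; 106; 134; 162; 190; 19; 159; 103; 47; 187; 131; 75; 2; 58;
       114; 170; 30; 86; 142; 3; 87; 171; 59; 143; 31; 115; 8; 36; 64; 92; 120;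
       148; 176; 1; 29; 57; 85; 113; 141; 169; 5; 145; 89; 33; 173; 117; 61; 4;
       116; 32; 144; 60; 172; 88; 9; 65; 121; 177; 37; 93; 149; 26; 166; 110; 54;
       194; 138; 82; 13; 181; 153; 125; 97; 69; 41; 10; 94; 178; 66; 150; 38;
       122; 17; 101; 185; 73; 157; 45; 129; 25; 137; 53; 165; 81; 193; 109; 11;
       123; 39; 151; 67; 179; 95; 18; 130; 46; 158; 74; 186; 102; 12; 152; 96;
       40; 180; 124; 68; 20; 188; 160; 132; 104; 76; 48; 23; 79; 135; 191; 51;
       107; 163; 27; 195; 167; 139; 111; 83; 55; 16; 72; 128; 184; 44; 100; 156;
       24; 108; 192; 80; 164; 52; 136; 15; 43; 71; 99; 127; 155; 183; 6; 174;
       146; 118; 90; 62; 34; 0; 7; 14; 21; 28; 35; 42; 49; 56; 63; 70; 77; 84;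
       91; 98; 105; 112; 119; 126; 133; 140; 147; 154; 161; 168; 175; 182; 189];
   [:: 27; 195; 167; 139; 111; 83; 55; 22; 50; 78; 106; 134; 162; 190; 18; 130;
       46; 158; 74; 186; 102; 4; 116; 32; 144; 60; 172; 88; 25; 137; 53; 165; 81;
       193; 109; 19; 159; 103; 47; 187; 131; 75; 16; 72; 128; 184; 44; 100; 156;
       1; 29; 57; 85; 113; 141; 169; 13; 181; 153; 125; 97; 69; 41; 17; 101; 185;
       73; 157; 45; 129; 26; 166; 110; 54; 194; 138; 82; 6; 174; 146; 118; 90;
       62; 34; 9; 65; 121; 177; 37; 93; 149; 23; 79; 135; 191; 51; 107; 163; 5;
       145; 89; 33; 173; 117; 61; 20; 188; 160; 132; 104; 76; 48; 24; 108; 192;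
       80; 164; 52; 136; 2; 58; 114; 170; 30; 86; 142; 3; 87; 171; 59; 143; 31;
       115; 8; 36; 64; 92; 120; 148; 176; 15; 43; 71; 99; 127; 155; 183; 11; 123;
       39; 151; 67; 179; 95; 10; 94; 178; 66; 150; 38; 122; 12; 152; 96; 40; 180;
       124; 68; 21; 182; 56; 112; 42; 91; 119; 84; 154; 189; 77; 105; 49; 14;
       161; 175; 28; 7; 70; 35; 126; 0; 63; 98; 140; 168; 133; 147];
   [:: 18; 130; 46; 158; 74; 186; 102; 2; 58; 114; 170; 30; 86; 142; 3; 87; 171;
       59; 143; 31; 115; 9; 65; 121; 177; 37; 93; 149; 27; 195; 167; 139; 111;
       83; 55; 16; 72; 128; 184; 44; 100; 156; 25; 137; 53; 165; 81; 193; 109;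
       17; 101; 185; 73; 157; 45; 129; 8; 36; 64; 92; 120; 148; 176; 6; 174; 146;
       118; 90; 62; 34; 10; 94; 178; 66; 150; 38; 122; 5; 145; 89; 33; 173; 117;
       61; 15; 43; 71; 99; 127; 155; 183; 13; 181; 153; 125; 97; 69; 41; 1; 29;
       57; 85; 113; 141; 169; 12; 152; 96; 40; 180; 124; 68; 22; 50; 78; 106;
       134; 162; 190; 24; 108; 192; 80; 164; 52; 136; 4; 116; 32; 144; 60; 172;
       88; 11; 123; 39; 151; 67; 179; 95; 19; 159; 103; 47; 187; 131; 75; 26;
       166; 110; 54; 194; 138; 82; 20; 188; 160; 132; 104; 76; 48; 23; 79; 135;
       191; 51; 107; 163; 147; 161; 112; 70; 189; 119; 154; 168; 28; 91; 63; 98;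
       140; 182; 77; 42; 126; 21; 35; 175; 7; 133; 84; 105; 49; 14; 56; 0]].

Lemma certificate196 : dca_certificate (column_table columns196) 195 3.
Proof. by vm_compute. Qed.

Definition columns220 : seq (seq nat) :=
  [::
   [:: 100; 80; 180; 60; 20; 200; 160; 140; 120; 40; 1; 201; 81; 181; 141; 101;
       61; 41; 21; 161; 2; 182; 162; 142; 62; 122; 102; 202; 82; 42; 23; 3; 103;
       203; 163; 123; 83; 63; 43; 183; 24; 204; 184; 164; 84; 144; 124; 4; 104;
       64; 145; 105; 85; 65; 205; 45; 25; 125; 5; 185; 46; 6; 206; 186; 106; 166;
       146; 26; 126; 86; 167; 127; 107; 87; 7; 67; 47; 147; 27; 207; 188; 168;
       48; 148; 108; 68; 28; 8; 208; 128; 89; 69; 169; 49; 9; 189; 149; 129; 109;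
       29; 90; 50; 30; 10; 150; 210; 190; 70; 170; 130; 111; 91; 191; 71; 31;
       211; 171; 151; 131; 51; 112; 72; 52; 32; 172; 12; 212; 92; 192; 152; 13;
       193; 173; 153; 73; 133; 113; 213; 93; 53; 34; 14; 114; 214; 174; 134; 94;
       74; 54; 194; 35; 215; 195; 175; 95; 155; 135; 15; 115; 75; 156; 116; 96;
       76; 216; 56; 36; 136; 16; 196; 177; 157; 37; 137; 97; 57; 17; 217; 197;
       117; 78; 58; 158; 38; 218; 178; 138; 118; 98; 18; 79; 39; 19; 219; 139;
       199; 179; 59; 159; 119; 0; 121; 22; 143; 44; 165; 66; 187; 88; 209; 110;
       11; 132; 33; 154; 55; 176; 77; 198; 99];
   [:: 81; 1; 181; 141; 201; 113; 53; 133; 213; 93; 3; 163; 23; 103; 203; 188;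
       168; 48; 148; 108; 30; 90; 10; 150; 50; 147; 67; 27; 207; 47; 117; 197;
       17; 57; 217; 157; 97; 177; 37; 137; 14; 174; 34; 114; 214; 102; 42; 122;
       202; 82; 172; 32; 72; 112; 52; 129; 189; 109; 29; 149; 124; 64; 144; 4;
       104; 192; 92; 152; 212; 12; 18; 98; 138; 178; 118; 126; 26; 86; 146; 166;
       58; 218; 78; 158; 38; 89; 69; 169; 49; 9; 101; 61; 41; 21; 161; 100; 80;
       180; 60; 20; 193; 73; 13; 173; 153; 145; 105; 85; 65; 205; 107; 167; 87;
       7; 127; 206; 46; 186; 106; 6; 160; 40; 200; 140; 120; 156; 116; 96; 76;
       216; 162; 2; 142; 62; 182; 36; 196; 56; 136; 16; 91; 31; 111; 191; 71;
       190; 130; 210; 70; 170; 204; 84; 24; 184; 164; 95; 175; 215; 35; 195; 155;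
       135; 15; 115; 75; 128; 208; 28; 68; 8; 159; 59; 119; 179; 199; 94; 194;
       134; 74; 54; 183; 43; 83; 123; 63; 131; 151; 51; 171; 211; 39; 139; 79;
       19; 219; 25; 185; 45; 125; 5; 33; 198; 121; 132; 0; 77; 11; 209; 143; 187;
       176; 99; 55; 154; 88; 165; 66; 44; 22; 110];
   [:: 75; 115; 135; 155; 15; 17; 117; 57; 217; 197; 97; 137; 157; 177; 37; 126;
       26; 86; 146; 166; 205; 65; 105; 145; 85; 150; 10; 50; 90; 30; 93; 213; 53;
       113; 133; 63; 123; 43; 183; 83; 98; 118; 18; 138; 178; 7; 87; 127; 167;
       107; 149; 29; 189; 129; 109; 31; 71; 91; 111; 191; 207; 27; 47; 67; 147;
       139; 219; 39; 79; 19; 148; 48; 108; 168; 188; 106; 186; 6; 46; 206; 156;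
       116; 96; 76; 216; 61; 161; 101; 41; 21; 80; 20; 100; 180; 60; 51; 131;
       171; 211; 151; 25; 185; 45; 125; 5; 62; 142; 182; 2; 162; 73; 153; 193;
       13; 173; 175; 195; 95; 215; 35; 199; 179; 59; 159; 119; 81; 1; 181; 141;
       201; 23; 3; 103; 203; 163; 204; 84; 24; 184; 164; 192; 92; 152; 212; 12;
       32; 52; 172; 72; 112; 140; 200; 120; 40; 160; 82; 202; 42; 102; 122; 170;
       70; 130; 190; 210; 136; 56; 16; 196; 36; 169; 89; 49; 9; 69; 54; 74; 194;
       94; 134; 214; 114; 174; 14; 34; 124; 64; 144; 4; 104; 208; 8; 128; 28; 68;
       38; 158; 218; 58; 78; 154; 209; 99; 88; 77; 143; 121; 198; 55; 11; 66;
       132; 22; 176; 33; 44; 0; 187; 110; 165]].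

Lemma certificate220 : dca_certificate (column_table columns220) 219 3.
Proof. by vm_compute. Qed.

Definition columns260 : seq (seq nat) :=
  [::
   [:: 40; 120; 160; 100; 140; 220; 80; 240; 60; 200; 20; 180; 1; 81; 121; 61;
       101; 181; 41; 201; 21; 161; 241; 141; 2; 162; 242; 122; 202; 102; 222; 42;
       82; 22; 62; 142; 183; 3; 43; 243; 23; 103; 223; 123; 203; 83; 163; 63;
       184; 84; 164; 44; 124; 24; 144; 224; 4; 204; 244; 64; 145; 45; 125; 5; 85;
       245; 105; 185; 225; 165; 205; 25; 106; 6; 86; 226; 46; 206; 66; 146; 186;
       126; 166; 246; 67; 227; 47; 187; 7; 167; 27; 107; 147; 87; 127; 207; 248;
       68; 108; 48; 88; 168; 28; 188; 8; 148; 228; 128; 209; 29; 69; 9; 49; 129;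
       249; 149; 229; 109; 189; 89; 210; 110; 190; 70; 150; 50; 170; 250; 30;
       230; 10; 90; 131; 211; 251; 191; 231; 51; 171; 71; 151; 31; 111; 11; 132;
       32; 112; 252; 72; 232; 92; 172; 212; 152; 192; 12; 93; 253; 73; 213; 33;
       193; 53; 133; 173; 113; 153; 233; 14; 94; 134; 74; 114; 194; 54; 214; 34;
       174; 254; 154; 15; 175; 255; 135; 215; 115; 235; 55; 95; 35; 75; 155; 236;
       136; 216; 96; 176; 76; 196; 16; 56; 256; 36; 116; 157; 237; 17; 217; 257;
       77; 197; 97; 177; 57; 137; 37; 118; 198; 238; 178; 218; 38; 158; 58; 138;
       18; 98; 258; 119; 19; 99; 239; 59; 219; 79; 159; 199; 139; 179; 259; 0;
       221; 182; 143; 104; 65; 26; 247; 208; 169; 130; 91; 52; 13; 234; 195; 156;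
       117; 78; 39];
   [:: 121; 181; 81; 101; 1; 61; 53; 133; 173; 113; 153; 233; 3; 243; 103; 183;
       43; 23; 108; 168; 68; 88; 248; 48; 150; 190; 210; 50; 70; 110; 147; 207;
       107; 127; 27; 87; 97; 57; 37; 197; 177; 137; 237; 217; 77; 157; 17; 257;
       14; 94; 134; 74; 114; 194; 162; 122; 102; 2; 242; 202; 252; 132; 72; 32;
       232; 112; 149; 109; 89; 249; 229; 189; 144; 224; 4; 204; 244; 64; 172;
       152; 12; 92; 212; 192; 18; 158; 98; 58; 258; 138; 186; 246; 146; 166; 66;
       126; 198; 178; 38; 118; 238; 218; 69; 129; 29; 49; 209; 9; 41; 201; 21;
       161; 241; 141; 160; 220; 120; 140; 40; 100; 213; 93; 33; 253; 193; 73; 45;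
       5; 245; 145; 125; 85; 227; 187; 167; 67; 47; 7; 226; 106; 46; 6; 206; 86;
       200; 80; 20; 240; 180; 60; 236; 136; 216; 96; 176; 76; 22; 222; 62; 42;
       142; 82; 16; 256; 116; 196; 56; 36; 211; 191; 51; 131; 251; 231; 250; 230;
       90; 170; 30; 10; 44; 184; 124; 84; 24; 164; 175; 135; 115; 15; 255; 215;
       95; 155; 55; 75; 235; 35; 188; 148; 128; 28; 8; 228; 199; 259; 159; 179;
       79; 139; 174; 54; 254; 214; 154; 34; 123; 83; 63; 223; 203; 163; 111; 151;
       171; 11; 31; 71; 239; 119; 59; 19; 219; 99; 225; 25; 185; 205; 105; 165;
       13; 78; 221; 52; 0; 117; 91; 169; 143; 247; 156; 39; 195; 234; 208; 65;
       26; 104; 182; 130];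
   [:: 55; 35; 155; 235; 95; 75; 57; 197; 137; 97; 37; 177; 217; 157; 257; 237;
       77; 17; 66; 146; 186; 126; 166; 246; 5; 145; 85; 45; 245; 125; 150; 190;
       210; 50; 70; 110; 153; 173; 53; 233; 113; 133; 163; 203; 223; 63; 83; 123;
       98; 138; 158; 258; 18; 58; 7; 47; 67; 167; 187; 227; 89; 189; 109; 229;
       149; 249; 51; 231; 191; 251; 211; 131; 87; 27; 127; 107; 207; 147; 99;
       219; 19; 59; 119; 239; 248; 68; 108; 48; 88; 168; 6; 226; 206; 106; 86;
       46; 96; 236; 176; 136; 76; 216; 161; 41; 241; 201; 141; 21; 120; 100; 220;
       40; 160; 140; 71; 31; 11; 171; 151; 111; 185; 165; 25; 105; 225; 205; 42;
       22; 142; 222; 82; 62; 73; 193; 253; 33; 93; 213; 215; 255; 15; 115; 135;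
       175; 179; 199; 79; 259; 139; 159; 121; 181; 81; 101; 1; 61; 23; 43; 183;
       103; 243; 3; 184; 84; 164; 44; 124; 24; 192; 212; 92; 12; 152; 172; 72;
       112; 132; 232; 252; 32; 20; 60; 80; 180; 200; 240; 2; 162; 242; 122; 202;
       102; 170; 250; 30; 230; 10; 90; 56; 116; 16; 36; 196; 256; 49; 69; 209;
       129; 9; 29; 34; 154; 214; 254; 54; 174; 114; 134; 14; 194; 74; 94; 224;
       204; 64; 144; 4; 244; 8; 128; 188; 228; 28; 148; 218; 238; 118; 38; 178;
       198; 234; 169; 39; 208; 117; 143; 221; 78; 195; 91; 26; 52; 182; 156; 13;
       104; 0; 247; 130; 65]].

Lemma certificate260 : dca_certificate (column_table columns260) 259 3.
Proof. by vm_compute. Qed.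

Definition columns308 : seq (seq nat) :=
  [::
   [:: 56; 168; 224; 280; 196; 112; 28; 140; 252; 84; 1; 113; 169; 225; 141; 57;
       281; 85; 197; 29; 2; 226; 30; 142; 282; 254; 58; 114; 170; 86; 199; 3; 59;
       115; 31; 255; 171; 283; 87; 227; 200; 116; 228; 32; 172; 144; 256; 4; 60;
       284; 145; 61; 173; 285; 117; 89; 201; 257; 5; 229; 90; 6; 118; 230; 62;
       34; 146; 202; 258; 174; 35; 259; 63; 175; 7; 287; 91; 147; 203; 119; 232;
       36; 92; 148; 64; 288; 204; 8; 120; 260; 177; 289; 37; 93; 9; 233; 149;
       261; 65; 205; 178; 94; 206; 10; 150; 122; 234; 290; 38; 262; 67; 179; 235;
       291; 207; 123; 39; 151; 263; 95; 68; 292; 96; 208; 40; 12; 124; 180; 236;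
       152; 13; 237; 41; 153; 293; 265; 69; 125; 181; 97; 210; 14; 70; 126; 42;
       266; 182; 294; 98; 238; 211; 127; 239; 43; 183; 155; 267; 15; 71; 295;
       156; 72; 184; 296; 128; 100; 212; 268; 16; 240; 45; 157; 213; 269; 185;
       101; 17; 129; 241; 73; 298; 102; 158; 214; 130; 46; 270; 74; 186; 18; 299;
       215; 19; 131; 271; 243; 47; 103; 159; 75; 188; 300; 48; 104; 20; 244; 160;
       272; 76; 216; 133; 245; 301; 49; 273; 189; 105; 217; 21; 161; 78; 190;
       246; 302; 218; 134; 50; 162; 274; 106; 23; 135; 191; 247; 163; 79; 303;
       107; 219; 51; 24; 248; 52; 164; 304; 276; 80; 136; 192; 108; 221; 25; 81;
       137; 53; 277; 193; 305; 109; 249; 222; 138; 250; 54; 194; 166; 278; 26;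
       82; 306; 111; 223; 279; 27; 251; 167; 83; 195; 307; 139; 0; 253; 198; 143;
       88; 33; 286; 231; 176; 121; 66; 11; 264; 209; 154; 99; 44; 297; 242; 187;
       132; 77; 22; 275; 220; 165; 110; 55];
   [:: 213; 45; 269; 185; 157; 140; 112; 252; 84; 28; 35; 259; 63; 175; 7; 89;
       201; 257; 5; 229; 272; 244; 76; 216; 160; 4; 144; 60; 284; 256; 113; 141;
       1; 169; 225; 105; 161; 189; 217; 21; 206; 178; 10; 150; 94; 9; 93; 289;
       177; 37; 54; 250; 194; 138; 222; 190; 218; 78; 246; 302; 285; 173; 117;
       61; 145; 106; 274; 50; 134; 162; 102; 130; 298; 158; 214; 18; 186; 270;
       46; 74; 90; 6; 118; 230; 62; 254; 58; 114; 170; 86; 2; 226; 30; 142; 282;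
       96; 68; 208; 40; 292; 182; 238; 266; 294; 98; 235; 67; 291; 207; 179; 277;
       193; 305; 109; 249; 245; 273; 133; 301; 49; 215; 271; 299; 19; 131; 24;
       248; 52; 164; 304; 72; 128; 156; 184; 296; 228; 200; 32; 172; 116; 92;
       232; 148; 64; 36; 166; 278; 26; 82; 306; 91; 119; 287; 147; 203; 79; 303;
       107; 219; 51; 69; 97; 265; 125; 181; 81; 221; 137; 53; 25; 139; 307; 83;
       167; 195; 41; 13; 153; 293; 237; 47; 75; 243; 103; 159; 171; 227; 255;
       283; 87; 100; 212; 268; 16; 240; 168; 196; 56; 224; 280; 267; 295; 155;
       15; 71; 39; 95; 123; 151; 263; 29; 197; 281; 57; 85; 23; 135; 191; 247;
       163; 233; 149; 261; 65; 205; 73; 241; 17; 101; 129; 183; 43; 127; 211;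
       239; 8; 288; 120; 260; 204; 300; 20; 188; 48; 104; 234; 262; 122; 290; 38;
       124; 152; 12; 180; 236; 80; 108; 276; 136; 192; 115; 59; 31; 3; 199; 70;
       210; 126; 42; 14; 146; 174; 34; 202; 258; 223; 251; 111; 279; 27; 143;
       110; 176; 44; 286; 209; 297; 264; 22; 55; 11; 99; 231; 198; 275; 165; 88;
       253; 66; 33; 242; 0; 121; 154; 132; 220; 187; 77];
   [:: 150; 10; 94; 178; 206; 259; 7; 35; 63; 175; 93; 37; 9; 289; 177; 8; 288;
       120; 260; 204; 298; 102; 158; 214; 130; 141; 225; 113; 1; 169; 182; 238;
       266; 294; 98; 36; 64; 232; 92; 148; 106; 274; 50; 134; 162; 184; 156; 296;
       128; 72; 14; 42; 210; 70; 126; 86; 170; 58; 254; 114; 85; 57; 197; 29;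
       281; 228; 200; 32; 172; 116; 119; 203; 91; 287; 147; 213; 45; 269; 185;
       157; 305; 277; 109; 249; 193; 6; 62; 90; 118; 230; 31; 115; 3; 199; 59;
       188; 300; 48; 104; 20; 179; 207; 67; 235; 291; 137; 81; 53; 25; 221; 227;
       87; 171; 255; 283; 258; 202; 174; 146; 34; 125; 265; 181; 97; 69; 240; 16;
       212; 100; 268; 124; 152; 12; 180; 236; 251; 27; 223; 111; 279; 112; 28;
       140; 252; 84; 19; 299; 131; 271; 215; 52; 24; 164; 304; 248; 217; 189; 21;
       161; 105; 270; 18; 46; 74; 186; 205; 65; 149; 233; 261; 101; 17; 129; 241;
       73; 51; 219; 303; 79; 107; 2; 226; 30; 142; 282; 89; 201; 257; 5; 229;
       256; 284; 144; 4; 60; 139; 307; 83; 167; 195; 117; 285; 61; 145; 173; 263;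
       151; 95; 39; 123; 136; 276; 192; 108; 80; 38; 290; 262; 234; 122; 40; 208;
       292; 68; 96; 138; 194; 222; 250; 54; 15; 155; 71; 295; 267; 243; 47; 103;
       159; 75; 306; 82; 278; 166; 26; 211; 127; 239; 43; 183; 237; 293; 13; 41;
       153; 196; 280; 168; 56; 224; 190; 218; 78; 246; 302; 247; 191; 163; 135;
       23; 244; 160; 272; 76; 216; 49; 301; 273; 245; 133; 77; 275; 44; 66; 55;
       297; 22; 220; 88; 209; 121; 154; 132; 110; 11; 286; 242; 143; 33; 165;
       253; 187; 264; 99; 231; 198; 176; 0]].

Lemma certificate308 : dca_certificate (column_table columns308) 307 3.
Proof. by vm_compute. Qed.

Definition columns340 : seq (seq nat) :=
  [::
   [:: 120; 240; 140; 280; 60; 200; 100; 220; 20; 40; 80; 160; 180; 260; 300;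
       320; 1; 121; 21; 161; 281; 81; 321; 101; 241; 261; 301; 41; 61; 141; 181;
       201; 122; 142; 182; 262; 282; 22; 62; 82; 222; 2; 242; 42; 162; 302; 202;
       322; 103; 223; 123; 263; 43; 183; 83; 203; 3; 23; 63; 143; 163; 243; 283;
       303; 224; 244; 284; 24; 44; 124; 164; 184; 324; 104; 4; 144; 264; 64; 304;
       84; 105; 125; 165; 245; 265; 5; 45; 65; 205; 325; 225; 25; 145; 285; 185;
       305; 326; 6; 46; 126; 146; 226; 266; 286; 86; 206; 106; 246; 26; 166; 66;
       186; 207; 227; 267; 7; 27; 107; 147; 167; 307; 87; 327; 127; 247; 47; 287;
       67; 188; 308; 208; 8; 128; 268; 168; 288; 88; 108; 148; 228; 248; 328; 28;
       48; 69; 189; 89; 229; 9; 149; 49; 169; 309; 329; 29; 109; 129; 209; 249;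
       269; 190; 210; 250; 330; 10; 90; 130; 150; 290; 70; 310; 110; 230; 30;
       270; 50; 171; 291; 191; 331; 111; 251; 151; 271; 71; 91; 131; 211; 231;
       311; 11; 31; 292; 312; 12; 92; 112; 192; 232; 252; 52; 172; 72; 212; 332;
       132; 32; 152; 173; 193; 233; 313; 333; 73; 113; 133; 273; 53; 293; 93;
       213; 13; 253; 33; 154; 274; 174; 314; 94; 234; 134; 254; 54; 74; 114; 194;
       214; 294; 334; 14; 275; 295; 335; 75; 95; 175; 215; 235; 35; 155; 55; 195;
       315; 115; 15; 135; 156; 176; 216; 296; 316; 56; 96; 116; 256; 36; 276; 76;
       196; 336; 236; 16; 137; 257; 157; 297; 77; 217; 117; 237; 37; 57; 97; 177;
       197; 277; 317; 337; 18; 138; 38; 178; 298; 98; 338; 118; 258; 278; 318;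
       58; 78; 158; 198; 218; 139; 159; 199; 279; 299; 39; 79; 99; 239; 19; 259;
       59; 179; 319; 219; 339; 0; 221; 102; 323; 204; 85; 306; 187; 68; 289; 170;
       51; 272; 153; 34; 255; 136; 17; 238; 119];
   [:: 121; 21; 161; 101; 1; 281; 81; 321; 273; 53; 293; 93; 213; 13; 253; 33;
       123; 263; 203; 83; 223; 103; 43; 183; 8; 288; 168; 268; 208; 308; 188;
       128; 210; 250; 330; 150; 190; 10; 90; 130; 87; 327; 127; 67; 307; 247; 47;
       287; 57; 97; 177; 337; 37; 197; 277; 317; 137; 257; 157; 297; 77; 217;
       117; 237; 154; 274; 174; 314; 94; 234; 134; 254; 142; 182; 262; 82; 122;
       282; 22; 62; 192; 112; 292; 312; 232; 252; 92; 12; 329; 29; 109; 269; 309;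
       129; 209; 249; 324; 104; 4; 144; 264; 64; 304; 84; 72; 212; 152; 32; 172;
       52; 332; 132; 158; 78; 258; 278; 198; 218; 58; 318; 206; 106; 246; 186;
       86; 26; 166; 66; 38; 178; 118; 338; 138; 18; 298; 98; 229; 169; 49; 149;
       89; 189; 69; 9; 241; 261; 301; 41; 61; 141; 181; 201; 280; 220; 100; 200;
       140; 240; 120; 60; 73; 333; 173; 193; 113; 133; 313; 233; 125; 165; 245;
       65; 105; 265; 5; 45; 227; 267; 7; 167; 207; 27; 107; 147; 226; 146; 326;
       6; 266; 286; 126; 46; 260; 180; 20; 40; 300; 320; 160; 80; 156; 176; 216;
       296; 316; 56; 96; 116; 42; 322; 202; 302; 242; 2; 222; 162; 276; 76; 16;
       236; 36; 256; 196; 336; 191; 331; 271; 151; 291; 171; 111; 251; 290; 70;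
       310; 110; 230; 30; 270; 50; 124; 44; 224; 244; 164; 184; 24; 284; 295;
       335; 75; 235; 275; 95; 175; 215; 195; 135; 15; 115; 55; 155; 35; 315; 108;
       148; 228; 48; 88; 248; 328; 28; 19; 259; 59; 339; 239; 179; 319; 219; 294;
       214; 54; 74; 334; 14; 194; 114; 23; 63; 143; 303; 3; 163; 243; 283; 91;
       131; 211; 31; 71; 231; 311; 11; 39; 299; 139; 159; 79; 99; 279; 199; 325;
       225; 25; 305; 205; 145; 285; 185; 153; 238; 221; 272; 0; 17; 51; 289; 323;
       187; 136; 119; 255; 34; 68; 85; 306; 204; 102; 170];
   [:: 55; 195; 135; 15; 155; 35; 315; 115; 277; 197; 37; 57; 317; 337; 177; 97;
       117; 217; 77; 137; 237; 297; 157; 257; 106; 246; 186; 66; 206; 86; 26;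
       166; 45; 5; 265; 105; 65; 245; 165; 125; 210; 250; 330; 150; 190; 10; 90;
       130; 53; 293; 93; 33; 273; 213; 13; 253; 163; 3; 23; 63; 243; 283; 303;
       143; 278; 318; 58; 218; 258; 78; 158; 198; 7; 167; 147; 107; 267; 227;
       207; 27; 249; 209; 129; 309; 269; 109; 29; 329; 251; 111; 171; 291; 151;
       271; 331; 191; 127; 67; 287; 47; 327; 87; 307; 247; 279; 99; 79; 39; 199;
       159; 139; 299; 188; 308; 208; 8; 128; 268; 168; 288; 126; 286; 266; 226;
       46; 6; 326; 146; 316; 156; 176; 216; 56; 96; 116; 296; 41; 201; 181; 141;
       301; 261; 241; 61; 140; 280; 220; 100; 240; 120; 60; 200; 311; 231; 71;
       91; 11; 31; 211; 131; 325; 225; 25; 305; 205; 145; 285; 185; 242; 42; 322;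
       202; 2; 222; 162; 302; 113; 73; 333; 173; 133; 313; 233; 193; 95; 275;
       295; 335; 175; 215; 235; 75; 59; 339; 219; 319; 259; 19; 239; 179; 281; 1;
       121; 21; 81; 321; 101; 161; 43; 103; 223; 123; 183; 83; 203; 263; 224;
       244; 284; 24; 44; 124; 164; 184; 332; 52; 172; 72; 132; 32; 152; 212; 112;
       292; 312; 12; 192; 232; 252; 92; 180; 20; 40; 80; 260; 300; 320; 160; 22;
       282; 122; 142; 62; 82; 262; 182; 310; 110; 50; 270; 70; 290; 230; 30; 196;
       256; 36; 276; 336; 236; 16; 76; 9; 69; 189; 89; 149; 49; 169; 229; 74;
       114; 194; 14; 54; 214; 294; 334; 274; 174; 314; 254; 154; 94; 234; 134;
       104; 4; 144; 84; 324; 264; 64; 304; 108; 148; 228; 48; 88; 248; 328; 28;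
       298; 18; 138; 38; 98; 338; 118; 178; 34; 289; 119; 68; 17; 323; 221; 238;
       255; 51; 306; 272; 102; 136; 153; 204; 0; 187; 170; 85]].

Lemma certificate340 : dca_certificate (column_table columns340) 339 3.
Proof. by vm_compute. Qed.

Theorem mainTheorem12 :
  forall n : nat, n \in [:: 140; 196; 220; 260; 308; 340] ->
    exists Q : 'M['I_n]_(n.+1, 4),
      is_DCA Q /\ DCA_normalized Q /\ DCA_P1 Q /\ DCA_P2 Q.
Proof.
move=> n; rewrite !inE.
case/orP=> [/eqP-> | ]; first exact: dca_of_certificate certificate140.
case/orP=> [/eqP-> | ]; first exact: dca_of_certificate certificate196.
case/orP=> [/eqP-> | ]; first exact: dca_of_certificate certificate220.
case/orP=> [/eqP-> | ]; first exact: dca_of_certificate certificate260.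
case/orP=> [/eqP-> | /eqP->]; first exact: dca_of_certificate certificate308.
exact: dca_of_certificate certificate340.
Qed.
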